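(* Let $P$ be a fixed tree poset with $|P|$ elements. For all integers $q\geq1$ and reals $\varepsilon>0$ there exists $\delta>0$ such that the following holds. If $\mathcal{F}\subseteq\widetilde{\mathcal{B}}_n$ satisfies $\mu(\mathcal{F})\geq q-1+\varepsilon$, then there exists a nested sequence $\mathcal{M}^{|P|}\subseteq\mathcal{M}^{|P|-1}\subseteq\cdots\subseteq\mathcal{M}^0$ of families of $q$-marked chains with markers from $\mathcal{F}$ such that for all $j\in[|P|]$: - for each $(\chi,Q)\in\mathcal{M}^j$ and $F\in Q$, $F$ is $\delta$-robust with respect to $\mathcal{M}^{j-1}$; - for each $i\in[q]$, $|\mathcal{L}^i(\mathcal{M}^j)|\geq\frac{2\varepsilon}{3q}\min_{F\in\mathcal{F}}\binom{n}{|F|}$.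
   Context: $\widetilde{\mathcal{B}}_n=\{F\subseteq[n]: |\,|F|-n/2\,|<2\sqrt{n\ln n}\}$. $\mu(\mathcal{F})=\sum_{F\in\mathcal{F}}1/\binom{n}{|F|}$ (Lubell weight). $\mathcal{C}$ is the set of full chains $\emptyset=C_0\subsetneq\cdots\subsetneq C_n=[n]$ (identified with their member sets). A $q$-chain is $(F_1,\dots,F_q)$ with $F_1\supsetneq\cdots\supsetneq F_q$, $F_i$ being its $i$-th member; a $q$-marked chain with markers from $\mathcal{F}$ is $(\chi,Q)$ with $\chi\in\mathcal{C}$ and $Q$ a $q$-chain of members of $\mathcal{F}$ lying on $\chi$. For a family $\mathcal{M}$ of $q$-marked chains, $\mathcal{L}^i(\mathcal{M})$ is the set of $D$ that are the $i$-th member of $Q$ for some $(\chi,Q)\in\mathcal{M}$, and $\mathcal{M}(F,i)$ is the set of $(\chi,Q)\in\mathcal{M}$ with $F$ the $i$-th member of $Q$. With $\chi_0$ a uniformly random full chain: $F$ is $(i,\delta)$-lower bad w.r.t. $\mathcal{M}$ if $\mathcal{M}(F,i)\neq\emptyset$ and there is $\mathcal{W}\subseteq2^{[n]}$ with (a) $D\subseteq F$ for all $D\in\mathcal{W}$, (b) $Q\cap\mathcal{W}\neq\emptyset$ for all $(\chi,Q)\in\mathcal{M}(F,i)$, (c) $\Pr[\chi_0\cap\mathcal{W}\neq\emptyset\mid F\in\chi_0]\le\delta$; $(i,\delta)$-upper bad is defined identically with $D\supseteq F$ in (a). $F$ is $\delta$-robust w.r.t. $\mathcal{M}$ if for all $i\in[q]$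 it is neither $(i,\delta)$-lower bad nor $(i,\delta)$-upper bad. *)

From HB Require Import structures.
From mathcomp Require Import all_boot all_order all_algebra.
From mathcomp Require Import reals exp.
Set Implicit Arguments. Unset Strict Implicit. Unset Printing Implicit Defensive.
Import Order.TTheory GRing.Theory Num.Theory.
Local Open Scope ring_scope.

Section Tree.
Context {d : Order.disp_t} {P : finPOrderType d}.
Definition covers (x y : P) : bool :=
  ((x < y)%O && [forall z : P, ~~ ((x < z)%O && (z < y)%O)]).
Definition hasse_adj (x y : P) : bool := covers x y || covers y x.
Definition tree_poset : Prop :=
  [/\ (0 < #|P|)%N,
      forall x y : P, connect hasse_adj x y
    & forall c : seq P, (2 < size c)%N -> ~ ucycle hasse_adj c].
End Tree.

Section Chains.
Variable R : realType.
Variable n : nat.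
Notation setn := {set 'I_n}.

Definition Btilde : {set setn} :=
  [set A : setn | `|(#|A|%:R : R) - n%:R / 2| < 2 * Num.sqrt (n%:R * ln (n%:R : R))].

Definition lubell (F : {set setn}) : R := \sum_(A in F) ('C(n, #|A|)%:R)^-1.

(* full chain emptyset = C_0 < C_1 < ... < C_n = [n], as its set of members:
   exactly one member of each size 0..n, totally ordered by inclusion *)
Definition full_chain (c : {set setn}) : bool :=
  [forall k : 'I_n.+1, #|[set A in c | #|A| == k]| == 1%N] &&
  [forall A in c, forall B in c, (A \subset B) || (B \subset A)].

Variable q : nat.
(* q-chain (F_1,...,F_q), F_1 ⊋ ... ⊋ F_q; index i : 'I_q stands for i+1 *)
Definition qchain (Q : {ffun 'I_q -> setn}) : bool :=
  [forall i : 'I_q, forall j : 'I_q, (i < j)%N ==> (Q j \proper Q i)].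

Definition mchain := ({set setn} * {ffun 'I_q -> setn})%type.

Definition marked_chain (F : {set setn}) (m : mchain) : bool :=
  [&& full_chain m.1, qchain m.2 & [forall i, (m.2 i \in F) && (m.2 i \in m.1)]].

Definition Lset (M : {set mchain}) (i : 'I_q) : {set setn} :=
  [set D : setn | [exists m in M, m.2 i == D]].

Definition Mat (M : {set mchain}) (F : setn) (i : 'I_q) : {set mchain} :=
  [set m in M | m.2 i == F].

(* Pr[chi_0 ∩ W ≠ ∅ | F ∈ chi_0], chi_0 a uniformly random full chain *)
Definition cond_prob (W : {set setn}) (F : setn) : R :=
  (#|[set c : {set setn} | [&& full_chain c, F \in c & [exists D in W, D \in c]]]|%:R)
  / (#|[set c : {set setn} | full_chain c && (F \in c)]|%:R).

Definition lower_bad (i : 'I_q) (delta : R) (M : {set mchain}) (F : setn) : Prop :=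
  Mat M F i != set0 /\
  exists W : {set setn},
    [/\ forall D, D \in W -> D \subset F,
        forall m, m \in Mat M F i -> exists j : 'I_q, m.2 j \in W
      & cond_prob W F <= delta].

Definition upper_bad (i : 'I_q) (delta : R) (M : {set mchain}) (F : setn) : Prop :=
  Mat M F i != set0 /\
  exists W : {set setn},
    [/\ forall D, D \in W -> F \subset D,
        forall m, m \in Mat M F i -> exists j : 'I_q, m.2 j \in W
      & cond_prob W F <= delta].

Definition robust (delta : R) (M : {set mchain}) (F : setn) : Prop :=
  forall i : 'I_q, ~ lower_bad i delta M F /\ ~ upper_bad i delta M F.

(* min_{A in F} binom(n, |A|); the neutral element 'C(n, n/2) is the largest
   binomial coefficient, so for nonempty F this is exactly the minimum *)
Definition min_binom (F : {set setn}) : nat :=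
  \big[minn/'C(n, n./2)]_(A in F) 'C(n, #|A|).
End Chains.

From HB Require Import structures.
From mathcomp Require Import all_boot all_order all_algebra perm.
From mathcomp Require Import reals exp.
From mathcomp Require Import zify ring lra.
Import Order.TTheory GRing.Theory Num.Theory.
Set Implicit Arguments. Unset Strict Implicit. Unset Printing Implicit Defensive.

(* Order the members of F lying on a full chain c by size, and call a q-marked
   chain a window of c when its markers are q consecutive ones in this order. A
   chain carrying k >= q - 1 members of F carries k - q + 1 windows, and a set A
   lies on n!/binom(n, |A|) full chains, so there are at least
   (mu(F) - q + 1) n! windows. Repeatedly discarding all windows with a given
   i-th marker D whenever they number at most delta times the chains through D
   loses at most delta q mu(F) n! of them. A window is determined by its chain
   and its i-th marker, so the surviving windows with i-th marker D inject into
   the chains through D that meet any family W covering them; hence every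
   conditional probability in the definition of badness exceeds delta.
   Finally D is the i-th marker of at most n!/binom(n, |D|) windows, which
   bounds each |L^i| from below. *)

Lemma ord_le_pred q (k : 'I_q) : k <= q.-1.
Proof. by have := ltn_ord k; lia. Qed.

Lemma card_double_count (I J : finType) (P : pred I) (Q : pred J) (r : I -> J -> bool) :
  \sum_(i | P i) #|[set j | Q j && r i j]| = \sum_(j | Q j) #|[set i | P i && r i j]|.
Proof.
have cardE (K : finType) (C p : pred K) : #|[set k | C k && p k]| = \sum_(k | C k) p k.
  rewrite -sum1_card big_mkcond [RHS]big_mkcond; apply: eq_bigr => k _.
  by rewrite inE; case: (C k); case: (p k).
under eq_bigr do rewrite cardE; under [RHS]eq_bigr do rewrite cardE.
exact: exchange_big.
Qed.

Section PermImset.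
Variable T : finType.

Lemma tperm_imset (x y : T) (A : {set T}) :
  x \in A -> y \notin A -> tperm x y @: A = y |: (A :\ x).
Proof.
move=> xA yA; apply/setP=> z; rewrite !inE; apply/imsetP/idP.
  case=> w wA ->; case: tpermP => [_|wy|/eqP wx _]; first by rewrite eqxx.
    by move: wA; rewrite wy (negbTE yA).
  by rewrite wx wA orbT.
case/orP=> [/eqP ->|/andP [zx zA]]; first by exists x; rewrite ?tpermL.
exists z => //; rewrite tpermD // eq_sym //.
by apply: contraNneq yA => <-.
Qed.

Lemma perm_imset_eq_card (A B : {set T}) :
  #|A| = #|B| -> exists s : {perm T}, s @: A = B.
Proof.
move: {2}#|A :\: B| (leqnn #|A :\: B|) => k; elim: k A => [|k IH] A.
  rewrite leqn0 cards_eq0 setD_eq0 => sAB eAB; exists 1%g.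
  rewrite (eq_imset (g := id)) ?imset_id; last by move=> x; rewrite perm1.
  by apply/eqP; rewrite eqEcard sAB eAB /=.
case: (set_0Vmem (A :\: B)) => [/eqP|[x]].
  by rewrite -cards_eq0 => /eqP e0 _; apply: IH; rewrite e0.
rewrite inE => /andP [xB xA] leAB eAB.
have [y]: exists y, y \in B :\: A.
  apply/set0Pn; rewrite -card_gt0.
  have := cardsID B A; have := cardsID A B; rewrite setIC.
  have : (0 < #|A :\: B|)%N by apply/card_gt0P; exists x; rewrite inE xB.
  lia.
rewrite inE => /andP [yA yB].
have [s sAB] : exists s : {perm T}, s @: (tperm x y @: A) = B.
  apply: IH; last by rewrite card_imset //; exact: perm_inj.
  rewrite tperm_imset //.
  suff -> : (y |: (A :\ x)) :\: B = (A :\: B) :\ x.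
    by rewrite (cardsD1 x) !inE xB xA /= add1n ltnS in leAB.
  apply/setP=> z; rewrite !inE; case: eqP => [->|_]; first by rewrite yB andbF.
  by rewrite /= andbCA.
exists (tperm x y * s)%g; rewrite -sAB -imset_comp.
by apply: eq_imset => z; rewrite permM.
Qed.
End PermImset.

Section Pruning.
Variables (R : realFieldType) (T K : finType) (cls : K -> {set T}) (theta : K -> R).
Local Open Scope ring_scope.
Hypothesis theta_ge0 : forall k, 0 <= theta k.

Definition classes_met (M : {set T}) : {set K} := [set k | M :&: cls k != set0].

Definition dense_classes (M : {set T}) : Prop :=
  forall k, M :&: cls k != set0 -> theta k < #|M :&: cls k|%:R.

Lemma prune_sparse_classes (M : {set T}) : exists2 M' : {set T}, M' \subset M &
  dense_classes M' /\ #|M|%:R <= #|M'|%:R + \sum_(k in classes_met M) theta k.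
Proof.
move: {2}#|M| (leqnn #|M|) => s; elim: s M => [|s IH] M.
  rewrite leqn0 cards_eq0 => /eqP ->; exists set0 => //; split.
    by move=> k; rewrite set0I eqxx.
  by rewrite cards0 add0r sumr_ge0.
case: (boolP [exists k, (M :&: cls k != set0) && ~~ (theta k < #|M :&: cls k|%:R)]);
  last first.
  rewrite negb_exists => /forallP dense _; exists M => //; split.
    by move=> k nek; have := dense k; rewrite nek /= negbK.
  by rewrite lerDl sumr_ge0.
case/existsP=> k0 /andP [nek0]; rewrite -leNgt => sparse le_s.
have /IH [M' sM' [dM' le_M']] : (#|M :\: cls k0| <= s)%N.
  by have := cardsID (cls k0) M; move: le_s nek0; rewrite -card_gt0; lia.
exists M'; first exact: subset_trans sM' (subsetDl _ _); split => //.
have met_sub : classes_met (M :\: cls k0) \subset classes_met M :\ k0.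
  apply/subsetP => k; rewrite !inE => /set0Pn [x /setIP [/setDP [xM xNk0] xk]].
  apply/andP; split; first by apply: contraNneq xNk0 => <-.
  by apply/set0Pn; exists x; rewrite inE xM xk.
have sum_le : \sum_(k in classes_met (M :\: cls k0)) theta k <=
              \sum_(k in classes_met M :\ k0) theta k.
  by rewrite [X in _ <= X](big_setID (classes_met (M :\: cls k0))) /= (setIidPr met_sub)
             lerDl sumr_ge0.
rewrite -(cardsID (cls k0) M) natrD (big_setD1 k0) ?inE //=.
lra.
Qed.
End Pruning.

Section FullChains.
Variable n : nat.
Notation setn := {set 'I_n}.

Definition full_chains : {set {set setn}} := [set c | full_chain c].
Definition chains_through (A : setn) : {set {set setn}} :=
  [set c | full_chain c && (A \in c)].

Lemma card_setn_le (A : setn) : #|A| <= n.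
Proof. by rewrite -[n in _ <= n]card_ord max_card. Qed.

Lemma full_chain_level (c : {set setn}) k : full_chain c -> k <= n ->
  #|[set A in c | #|A| == k]| = 1.
Proof. by case/andP=> /forallP /(_ (Ordinal (_ : k < n.+1))) /eqP. Qed.

Lemma full_chain_card_inj (c : {set setn}) :
  full_chain c -> {in c &, injective (fun A : setn => #|A|)}.
Proof.
move=> fc A B Ac Bc eAB.
have /eqP/cards1P [C eC] := full_chain_level fc (card_setn_le A).
have : A \in [set X in c | #|X| == #|A|] by rewrite inE Ac eqxx.
have : B \in [set X in c | #|X| == #|A|] by rewrite inE Bc eAB eqxx.
by rewrite eC !inE => /eqP -> /eqP ->.
Qed.

Lemma full_chain_total (c : {set setn}) A B : full_chain c -> A \in c -> B \in c ->
  (A \subset B) || (B \subset A).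
Proof. by case/andP=> _ /forall_inP /[apply] /forall_inP /[apply]. Qed.

Lemma full_chain_proper (c : {set setn}) A B : full_chain c -> A \in c -> B \in c ->
  #|A| < #|B| -> A \proper B.
Proof.
move=> fc Ac Bc ltAB; rewrite properEcard ltAB andbT.
case/orP: (full_chain_total fc Ac Bc) => // /subset_leq_card.
by rewrite leqNgt ltAB.
Qed.

Lemma full_chain_perm (s : {perm 'I_n}) (c : {set setn}) :
  full_chain c -> full_chain [set s @: A | A : setn in c].
Proof.
move=> fc; have sinj : injective (fun A : setn => s @: A).
  by apply: imset_inj; exact: perm_inj.
have card_s (A : setn) : #|s @: A| = #|A| by apply: card_imset; exact: perm_inj.
apply/andP; split.
  apply/forallP=> k; apply/eqP.
  have -> : [set X in [set s @: A | A : setn in c] | #|X| == k] =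
            [set s @: A | A : setn in [set A in c | #|A| == k]].
    apply/setP=> X; rewrite inE; apply/andP/imsetP.
      case=> /imsetP [A Ac ->]; rewrite card_s => Ak.
      by exists A; rewrite // inE Ac.
    case=> A; rewrite inE => /andP [Ac Ak] ->.
    by rewrite imset_f // card_s.
  by rewrite card_imset // full_chain_level // -ltnS.
apply/forall_inP=> _ /imsetP [A Ac ->]; apply/forall_inP=> _ /imsetP [B Bc ->].
by case/orP: (full_chain_total fc Ac Bc) => sAB; rewrite (imsetS _ sAB) ?orbT.
Qed.

Lemma card_chains_through_perm (s : {perm 'I_n}) (A : setn) :
  #|chains_through (s @: A)| = #|chains_through A|.
Proof.
have le_perm (t : {perm 'I_n}) (B : setn) :
    #|chains_through B| <= #|chains_through (t @: B)|.
  have tinj : injective (fun X : setn => t @: X) by apply: imset_inj; exact: perm_inj.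
  rewrite -(card_imset _ (imset_inj tinj)); apply/subset_leq_card/subsetP.
  move=> d /imsetP [c]; rewrite !inE => /andP [fc Bc] ->.
  by rewrite full_chain_perm //= imset_f.
apply/eqP; rewrite eqn_leq le_perm andbT.
have {2}<- : (s^-1)%g @: (s @: A) = A.
  by rewrite -imset_comp -[RHS]imset_id; apply: eq_imset => x /=; rewrite permK.
exact: le_perm.
Qed.

Lemma card_chains_through_eq (A B : setn) :
  #|A| = #|B| -> #|chains_through A| = #|chains_through B|.
Proof. by case/perm_imset_eq_card=> s <-; rewrite card_chains_through_perm. Qed.

Lemma card_chains_through_binom (A : setn) :
  #|chains_through A| * 'C(n, #|A|) = #|full_chains|.
Proof.
have level_sum : \sum_(B : setn | #|B| == #|A|) #|chains_through B| = #|full_chains|.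
  rewrite /chains_through card_double_count -[RHS]sum1_card.
  under [RHS]eq_bigl do rewrite inE.
  apply: eq_bigr => c fc; rewrite -(full_chain_level fc (card_setn_le A)).
  by apply: eq_card => B; rewrite !inE andbC.
rewrite -level_sum (eq_bigr (fun=> #|chains_through A|)); last first.
  by move=> B /eqP eBA; apply: card_chains_through_eq.
rewrite sum_nat_const mulnC -[n in 'C(n, _)]card_ord -card_draws.
by congr (_ * _); apply: eq_card => B; rewrite inE.
Qed.

Lemma sum_chains_through_lubell (R : realType) (F : {set setn}) :
  ((\sum_(A in F) #|chains_through A|)%N%:R = #|full_chains|%:R * lubell R F :> R)%R.
Proof.
rewrite /lubell natr_sum mulr_sumr; apply: eq_bigr => A _.
have binom_neq0 : ('C(n, #|A|)%:R != 0 :> R)%R.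
  by rewrite pnatr_eq0 -lt0n bin_gt0 card_setn_le.
by rewrite -(card_chains_through_binom A) natrM mulfK.
Qed.

Lemma card_initial_segment k : k <= n -> #|[set j : 'I_n | j < k]| = k.
Proof.
move=> kn; have winj : injective (widen_ord kn) by move=> i j /(congr1 val) /= /val_inj.
rewrite -[RHS]card_ord -(card_imset _ winj); apply: eq_card => j; rewrite inE.
apply/idP/imsetP => [jk|[i _ ->]]; last by rewrite /= ltn_ord.
by exists (Ordinal jk) => //; apply: val_inj.
Qed.

Lemma full_chains_gt0 : 0 < #|full_chains|.
Proof.
apply/card_gt0P; exists [set [set j : 'I_n | j < k] | k : 'I_n.+1]; rewrite inE.
have segment_le (k : 'I_n.+1) : k <= n by rewrite -ltnS.
apply/andP; split.
  apply/forallP=> k; apply/cards1P; exists [set j : 'I_n | j < k].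
  apply/setP=> X; rewrite !inE; apply/andP/eqP => [[/imsetP [i _ ->]] | ->].
    rewrite !card_initial_segment // => /eqP ik.
    by apply/setP=> j; rewrite !inE ik.
  by rewrite imset_f // card_initial_segment.
apply/forall_inP=> _ /imsetP [i _ ->]; apply/forall_inP=> _ /imsetP [k _ ->].
by case: (leqP i k) => ik; apply/orP; [left | right]; apply/subsetP=> j;
  rewrite !inE => /leq_trans; apply; rewrite // ltnW.
Qed.
End FullChains.

Section Windows.
Variables (n q : nat) (F : {set {set 'I_n}}).
Notation setn := {set 'I_n}.
Implicit Types (c : {set setn}) (D E : setn).

Definition marker_rank c D : nat := #|[set E in c :&: F | #|E| < #|D|]|.

Lemma marker_rank_le c D E : #|E| <= #|D| -> marker_rank c E <= marker_rank c D.
Proof.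
move=> leED; apply/subset_leq_card/subsetP=> X.
by rewrite !inE => /andP [-> /leq_trans]; apply.
Qed.

Lemma marker_rank_lt c D E : E \in c :&: F -> #|E| < #|D| -> marker_rank c E < marker_rank c D.
Proof.
move=> EcF ltED; apply/proper_card/properP; split.
  by apply/subsetP=> X; rewrite !inE => /andP [-> /ltn_trans]; apply.
by exists E; rewrite in_set ?EcF ?ltnn ?andbF.
Qed.

Lemma marker_rank_inj c : full_chain c -> {in c :&: F &, injective (marker_rank c)}.
Proof.
move=> fc D E DcF EcF eDE.
have [Dc _] := setIP DcF; have [Ec _] := setIP EcF.
apply: (full_chain_card_inj fc Dc Ec).
case: (ltngtP #|D| #|E|) => // [/(marker_rank_lt DcF) | /(marker_rank_lt EcF)];
  by rewrite eDE ltnn.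
Qed.

Lemma marker_rank_bound c D : D \in c :&: F -> marker_rank c D < #|c :&: F|.
Proof.
move=> DcF; apply/proper_card/properP; split.
  by apply/subsetP=> X; rewrite inE => /andP [].
by exists D; rewrite // inE ltnn andbF.
Qed.

Lemma uniq_marker_ranks c (S : {set setn}) : full_chain c -> S \subset c :&: F ->
  uniq (map (marker_rank c) (enum S)).
Proof.
move=> fc /subsetP sS; rewrite map_inj_in_uniq ?enum_uniq // => D E.
by rewrite !mem_enum => /sS DcF /sS EcF; apply: marker_rank_inj.
Qed.

Lemma marker_rank_onto c r : full_chain c -> r < #|c :&: F| ->
  exists2 E, E \in c :&: F & marker_rank c E = r.
Proof.
move=> fc ltr.
have sub : {subset map (marker_rank c) (enum (c :&: F)) <= iota 0 #|c :&: F|}.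
  by move=> x /mapP [D]; rewrite mem_enum => DcF ->; rewrite mem_iota marker_rank_bound.
have [|_ eq_ranks] := uniq_min_size (uniq_marker_ranks fc (subxx _)) sub.
  by rewrite size_iota size_map -cardE.
have : r \in iota 0 #|c :&: F| by rewrite mem_iota.
by rewrite -eq_ranks => /mapP [E]; rewrite mem_enum => EcF ->; exists E.
Qed.

Lemma card_markers_below c m : full_chain c ->
  #|[set D in c :&: F | marker_rank c D < m]| <= m.
Proof.
move=> fc; set S := [set D in _ | _].
have sS : S \subset c :&: F by apply/subsetP=> D; rewrite inE => /andP [].
have sub : {subset map (marker_rank c) (enum S) <= iota 0 m}.
  by move=> x /mapP [D]; rewrite mem_enum inE => /andP [_ ?] ->; rewrite mem_iota.
by have := uniq_leq_size (uniq_marker_ranks fc sS) sub; rewrite size_map size_iota -cardE.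
Qed.

Definition marker_of_rank c r : setn :=
  odflt set0 [pick E in c :&: F | marker_rank c E == r].

Lemma marker_of_rankP c r : full_chain c -> r < #|c :&: F| ->
  marker_of_rank c r \in c :&: F /\ marker_rank c (marker_of_rank c r) = r.
Proof.
move=> fc ltr; rewrite /marker_of_rank; case: pickP => [E /andP [EcF /eqP] | none] //=.
have [E EcF rE] := marker_rank_onto fc ltr.
by have := none E; rewrite EcF rE eqxx.
Qed.

Lemma marker_rankK c D : full_chain c -> D \in c :&: F ->
  marker_of_rank c (marker_rank c D) = D.
Proof.
move=> fc DcF; have [EcF rE] := marker_of_rankP fc (marker_rank_bound DcF).
by apply: (marker_rank_inj fc).
Qed.

Definition window c D : {ffun 'I_q -> setn} :=
  [ffun k : 'I_q => marker_of_rank c (marker_rank c D - k)].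

(* The bound [q.-1 <= marker_rank c D] keeps the truncated subtraction in
   [window c D] exact. *)
Definition windows : {set mchain n q} :=
  [set m | [exists D, [&& full_chain m.1, D \in m.1 :&: F,
                          q.-1 <= marker_rank m.1 D & m.2 == window m.1 D]]].

Lemma windowP c D (k : 'I_q) : full_chain c -> D \in c :&: F -> q.-1 <= marker_rank c D ->
  window c D k \in c :&: F /\ marker_rank c (window c D k) = marker_rank c D - k.
Proof.
move=> fc DcF topD; rewrite ffunE; apply: marker_of_rankP => //.
exact: leq_ltn_trans (leq_subr _ _) (marker_rank_bound DcF).
Qed.

Lemma windowsP m : m \in windows -> exists2 D, D \in m.1 :&: F &
  [/\ full_chain m.1, q.-1 <= marker_rank m.1 D & m.2 = window m.1 D].
Proof. by rewrite inE => /existsP [D /and4P [fc DcF topD /eqP ->]]; exists D. Qed.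

Lemma windows_full_chain m : m \in windows -> full_chain m.1.
Proof. by case/windowsP=> D _ []. Qed.

Lemma windows_marker m k : m \in windows -> m.2 k \in m.1 :&: F.
Proof. by case/windowsP=> D DcF [fc topD ->]; exact: (windowP k fc DcF topD).1. Qed.

Lemma windows_marked m : m \in windows -> marked_chain F m.
Proof.
move=> mW; apply/and3P; split; first exact: windows_full_chain.
  move: mW; case: m => c Q /windowsP /= [D DcF [fc topD ->]].
  have wP k := windowP k fc DcF topD.
  apply/forallP=> i; apply/forallP=> j; apply/implyP=> ij.
  have [[jc _] [ic _]] := (setIP (wP j).1, setIP (wP i).1).
  apply: (full_chain_proper fc jc ic); rewrite ltnNge; apply/negP=> /(marker_rank_le c).
  rewrite (wP i).2 (wP j).2 leqNgt ltn_sub2l //.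
  exact: leq_trans ij (leq_trans (ord_le_pred j) topD).
by apply/forallP=> k; have /setIP [-> ->] := windows_marker k mW.
Qed.

Lemma windows_eq m m' (i : 'I_q) : m \in windows -> m' \in windows ->
  m.1 = m'.1 -> m.2 i = m'.2 i -> m = m'.
Proof.
case: m => c Q; case: m' => c' Q' /windowsP /= [D DcF [fc topD ->]].
move=> /windowsP /= [D' D'cF [_ topD' ->]] ecc'; subst c' => eQ.
have := congr1 (marker_rank c) eQ.
rewrite (windowP i fc DcF topD).2 (windowP i fc D'cF topD').2 => eDD'.
suff -> : D = D' by [].
apply: (marker_rank_inj fc) => //.
by move: eDD' (leq_trans (ord_le_pred i) topD) (leq_trans (ord_le_pred i) topD'); lia.
Qed.

Lemma card_windows_on c : 0 < q -> full_chain c ->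
  #|c :&: F| <= #|[set m in windows | m.1 == c]| + q.-1.
Proof.
move=> q_gt0 fc; set top := [set D | q.-1 <= marker_rank c D].
rewrite -(cardsID top) leq_add //; last first.
  apply: leq_trans (card_markers_below q.-1 fc); apply/subset_leq_card/subsetP => D.
  by rewrite !inE ltnNge andbC.
pose k0 : 'I_q := Ordinal q_gt0.
have winj : {in c :&: F :&: top &, injective (fun D => (c, window c D) : mchain n q)}.
  move=> D D' /setIP [DcF topD] /setIP [D'cF topD'] [] /ffunP /(_ k0).
  by rewrite !ffunE !subn0 !marker_rankK.
rewrite -(card_in_imset winj); apply/subset_leq_card/subsetP=> m /imsetP [D].
move=> /setIP [DcF]; rewrite inE => topD ->.
by rewrite !inE eqxx andbT; apply/existsP; exists D; rewrite fc DcF topD eqxx.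
Qed.

Lemma card_windows_ge : 0 < q ->
  \sum_(A in F) #|chains_through A| <= #|windows| + q.-1 * #|full_chains n|.
Proof.
move=> q_gt0.
have -> : \sum_(A in F) #|chains_through A| = \sum_(c | full_chain c) #|c :&: F|.
  rewrite /chains_through card_double_count; apply: eq_bigr => c _.
  by apply: eq_card => A; rewrite !inE andbC.
apply: leq_trans (leq_sum _ (fun c fc => card_windows_on q_gt0 fc)) _.
rewrite big_split /= leq_add //.
  rewrite -[#|windows|]sum1_card card_double_count; apply: leq_sum => m _.
  rewrite -(cards1 m.1); apply/subset_leq_card/subsetP => c.
  by rewrite !inE eq_sym => /andP [].
rewrite sum_nat_const mulnC; apply: eq_leq; congr (_ * _).
by apply: eq_card => c; rewrite inE.
Qed.
End Windows.

Section DenseWindows.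
Variables (n q : nat) (F : {set {set 'I_n}}).
Notation setn := {set 'I_n}.
Implicit Types (M : {set mchain n q}) (D : setn).

Definition marker_class (p : setn * 'I_q) : {set mchain n q} :=
  [set m : mchain n q | m.2 p.2 == p.1].

Lemma Mat_marker_class M D i : Mat M D i = M :&: marker_class (D, i).
Proof. by apply/setP=> m; rewrite !inE. Qed.

Lemma windows_fst_inj M D i :
  M \subset windows q F -> {in Mat M D i &, injective (fun m => m.1)}.
Proof.
move=> /subsetP sM m m'; rewrite !inE => /andP [mM /eqP mD] /andP [m'M /eqP m'D] e1.
by apply: (windows_eq (i := i) (sM _ mM) (sM _ m'M)); rewrite // mD m'D.
Qed.

Lemma windows_chain_through M D i m : M \subset windows q F -> m \in Mat M D i ->
  m.1 \in chains_through D.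
Proof.
move=> /subsetP sM; rewrite inE => /andP [/sM mW /eqP <-].
by have /setIP [? _] := windows_marker i mW; rewrite inE (windows_full_chain mW).
Qed.

Lemma card_Mat_windows M D i :
  M \subset windows q F -> #|Mat M D i| <= #|chains_through D|.
Proof.
move=> sM; rewrite -(card_in_imset (windows_fst_inj sM)); apply/subset_leq_card/subsetP.
by move=> _ /imsetP [m mMat ->]; exact: windows_chain_through mMat.
Qed.

Lemma cond_prob_ge (R : realType) M D i (W : {set setn}) : M \subset windows q F ->
  (forall m, m \in Mat M D i -> exists j, m.2 j \in W) ->
  (#|Mat M D i|%:R / #|chains_through D|%:R <= cond_prob R W D)%R.
Proof.
move=> sM cover; apply: ler_wpM2r; first by rewrite invr_ge0 ler0n.
rewrite ler_nat -(card_in_imset (windows_fst_inj sM)); apply/subset_leq_card/subsetP.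
move=> _ /imsetP [m mMat ->]; have := windows_chain_through sM mMat; rewrite !inE.
case/andP=> fc Dm; rewrite fc Dm /=; have [j mjW] := cover m mMat.
move: mMat; rewrite inE => /andP [/(subsetP sM) /(windows_marker j) /setIP [mj _] _].
by apply/existsP; exists (m.2 j); rewrite mjW.
Qed.

Lemma robust_dense_windows (R : realType) (delta : R) M D : M \subset windows q F ->
  dense_classes marker_class (fun p => delta * #|chains_through p.1|%:R)%R M ->
  robust delta M D.
Proof.
move=> sM dense i.
suff cond_gt (W : {set setn}) : Mat M D i != set0 ->
    (forall m, m \in Mat M D i -> exists j, m.2 j \in W) -> (delta < cond_prob R W D)%R.
  by split=> [[neMat [W [_ cover]]] | [neMat [W [_ cover]]]];
    rewrite leNgt (cond_gt W neMat cover).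
move=> neMat cover; apply: lt_le_trans (cond_prob_ge R sM cover).
have chains_gt0 : 0 < #|chains_through D|.
  by apply: leq_trans (card_Mat_windows D i sM); rewrite card_gt0.
rewrite ltr_pdivlMr ?ltr0n //.
by move: neMat (dense (D, i)); rewrite Mat_marker_class => ne /(_ ne).
Qed.

Lemma min_binom_le D : D \in F -> min_binom F <= 'C(n, #|D|).
Proof. by move=> DF; rewrite /min_binom -minEnat -leEnat; apply: bigmin_le_cond. Qed.

Lemma card_Lset_windows M i : M \subset windows q F ->
  #|M| * min_binom F <= #|Lset M i| * #|full_chains n|.
Proof.
move=> sM.
have -> : #|M| = \sum_(D in Lset M i) #|Mat M D i|.
  rewrite -sum1_card (partition_big (fun m : mchain n q => m.2 i) (mem (Lset M i))) /=.
    by apply: eq_bigr => D _; rewrite -sum1_card; apply: eq_bigl => m; rewrite inE.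
  by move=> m mM; rewrite inE; apply/existsP; exists m; rewrite mM eqxx.
rewrite big_distrl /= -sum_nat_const; apply: leq_sum => D.
rewrite inE => /existsP [m /andP [mM /eqP mD]].
have /setIP [_ DF] := windows_marker i (subsetP sM _ mM); rewrite mD in DF.
rewrite -(card_chains_through_binom D) leq_mul ?min_binom_le //.
exact: card_Mat_windows.
Qed.

Lemma sum_classes_met M : M \subset windows q F ->
  \sum_(p in classes_met marker_class M) #|chains_through p.1| <=
  q * \sum_(A in F) #|chains_through A|.
Proof.
move=> sM.
have met_sub : classes_met marker_class M \subset [set p | p.1 \in F].
  apply/subsetP=> p; rewrite !inE => /set0Pn [m /setIP [mM]]; rewrite inE => /eqP <-.
  by have /setIP [] := windows_marker p.2 (subsetP sM _ mM).
apply: (@leq_trans (\sum_(p in [set p | p.1 \in F]) #|chains_through p.1|)).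
  rewrite [X in _ <= X](big_setID (classes_met marker_class M)) /=.
  by rewrite (setIidPr met_sub) leq_addr.
have -> : q * \sum_(A in F) #|chains_through A| =
          \sum_(A in F) \sum_(j : 'I_q) #|chains_through A|.
  by rewrite big_distrr; apply: eq_bigr => A _; rewrite sum_nat_const card_ord.
by rewrite pair_big_dep /=; apply: eq_leq; apply: eq_bigl => p; rewrite inE andbT.
Qed.

Lemma card_Lset_windows_ge (R : realType) M i (x : R) : M \subset windows q F ->
  (x * #|full_chains n|%:R <= #|M|%:R -> x * (min_binom F)%:R <= #|Lset M i|%:R)%R.
Proof.
move=> sM M_large.
have N_gt0 : (0 < #|full_chains n|%:R :> R)%R by rewrite ltr0n full_chains_gt0.
rewrite -(ler_pM2r N_gt0); apply: le_trans (_ : _ <= #|M|%:R * (min_binom F)%:R)%R _.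
  by rewrite mulrAC ler_wpM2r.
by rewrite -!natrM ler_nat card_Lset_windows.
Qed.

Lemma prune_windows (R : realType) (delta : R) : (0 <= delta)%R ->
  exists2 M : {set mchain n q}, M \subset windows q F &
    dense_classes marker_class (fun p => delta * #|chains_through p.1|%:R)%R M /\
    (#|windows q F|%:R <=
       #|M|%:R + delta * q%:R * (\sum_(A in F) #|chains_through A|)%N%:R)%R.
Proof.
move=> delta_ge0.
have theta_ge0 (p : setn * 'I_q) : (0 <= delta * #|chains_through p.1|%:R :> R)%R.
  by rewrite mulr_ge0.
have [M sM [dense budget]] := prune_sparse_classes marker_class theta_ge0 (windows q F).
exists M => //; split => //; apply: le_trans budget _; rewrite lerD2l -mulr_sumr -mulrA.
by rewrite ler_wpM2l // -natr_sum -natrM ler_nat sum_classes_met.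
Qed.
End DenseWindows.

Local Open Scope ring_scope.

Lemma pruned_count_ge (R : realFieldType) (N mu S W M q eps : R) :
  0 < eps -> 1 <= q -> 0 <= N -> S = N * mu -> q - 1 + eps <= mu ->
  S <= W + (q - 1) * N -> W <= M + eps / (3 * (q + eps)) * S ->
  2 / 3 * eps * N <= M.
Proof.
move=> eps_gt0 q_ge1 N_ge0 -> mu_ge leS leW.
set t := eps / (3 * (q + eps)).
have t_eps : t * (q + eps) = eps / 3.
  by rewrite /t; field; rewrite gt_eqF ?ltr_wpDr ?addr_gt0 //; lra.
have t_lt1 : t < 1.
  rewrite /t ltr_pdivrMr ?mulr_gt0 //; first lra.
  by rewrite addr_gt0 //; lra.
have t_ge0 : 0 <= t by rewrite /t divr_ge0 ?mulr_ge0 //; lra.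
have mu_low : (1 - t) * (q - 1 + eps) * N <= (1 - t) * mu * N.
  by rewrite ler_wpM2r // ler_wpM2l //; lra.
have t_low : t * (q - 1 + eps) * N <= eps / 3 * N.
  by rewrite -t_eps ler_wpM2r // ler_wpM2l //; lra.
have {}leW : W <= M + t * (N * mu) := leW.
clearbody t; nra.
Qed.

Unset Implicit Arguments.

Theorem theorem4p12 (R : realType) (d : Order.disp_t) (P : finPOrderType d) :
  tree_poset (P := P) ->
  forall (q : nat) (eps : R), (0 < q)%N -> 0 < eps ->
  exists delta : R, 0 < delta /\
  forall (n : nat) (F : {set {set 'I_n}}),
    F \subset Btilde R n ->
    (q.-1)%:R + eps <= lubell R F ->
    exists Ms : nat -> {set mchain n q},
      [/\ forall j, (j < #|P|)%N -> Ms j.+1 \subset Ms j,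
          forall j, (j <= #|P|)%N -> forall m, m \in Ms j -> marked_chain F m
        & forall j, (0 < j <= #|P|)%N ->
            (forall m, m \in Ms j -> forall k : 'I_q,
               robust delta (Ms j.-1) (m.2 k)) /\
            (forall i : 'I_q,
               (2 * eps / (3 * q%:R)) * (min_binom F)%:R <= (#|Lset (Ms j) i|)%:R)].
Proof.
move=> _ q eps q_gt0 eps_gt0.
have q_ge1 : 1 <= q%:R :> R by rewrite ler1n.
set t := eps / (3 * (q%:R + eps)).
have delta_gt0 : 0 < t / q%:R.
  by rewrite !divr_gt0 ?ltr0n ?mulr_gt0 ?addr_gt0 // (lt_le_trans ltr01).
exists (t / q%:R); split=> // n F _ lubell_ge.
have [M sM [dense budget]] := prune_windows q F (ltW delta_gt0).
have q1E : q.-1%:R = q%:R - 1 :> R by rewrite -subn1 natrB.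
have M_large : 2 / 3 * eps * #|full_chains n|%:R <= #|M|%:R.
  apply: (pruned_count_ge (q := q%:R) (mu := lubell R F) _ _ _
           (sum_chains_through_lubell R F) _ _ (le_trans budget _)) => //.
  - by rewrite -q1E.
  - by rewrite -q1E -natrM -natrD ler_nat card_windows_ge.
  by rewrite mulfVK ?pnatr_eq0 -?lt0n.
exists (fun=> M); split=> [j _ | j _ m mM | j _]; first exact: subxx.
  exact: windows_marked (subsetP sM _ mM).
split=> [m _ k | i]; first exact: robust_dense_windows (m.2 k) sM dense.
apply: le_trans (card_Lset_windows_ge i sM M_large); rewrite ler_wpM2r //.
by rewrite ler_pdivrMr ?mulr_gt0 ?ltr0n //; nra.
Qed.
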